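(* The randomized query complexity of $TARSKI(2,k)$ is $\Omega(k)$: there is a constant $c>0$ such that for every $k\in\mathbb{N}$ it is at least $ck$.
   Context: $TARSKI(2,k)$: given oracle access to an unknown function $f:\{0,1\}^k\to\{0,1\}^k$ that is monotone for the componentwise order ($a\le b$ iff $a_i\le b_i$ for all $i$; monotone means $a\le b\Rightarrow f(a)\le f(b)$), where a query of $v$ returns $f(v)$, find $x$ with $f(x)=x$. The randomized query complexity is the minimum, over randomized algorithms that on every input output a fixed point with probability at least $9/10$, of the worst-case expected number of queries (expectation over the algorithm's coins). *)

From mathcomp Require Import all_boot.
From Stdlib Require Import Reals.
Set Implicit Arguments. Unset Strict Implicit. Unset Printing Implicit Defensive.

Definition cube (k : nat) := {ffun 'I_k -> bool}.

Definition cube_le (k : nat) (a b : cube k) : Prop := forall i : 'I_k, (a i <= b i)%N.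

Definition monotone (k : nat) (f : cube k -> cube k) : Prop :=
  forall a b : cube k, cube_le a b -> cube_le (f a) (f b).

(* Deterministic query algorithms = (finite-depth) decision trees:
   a node queries a point v and branches on the answer f v; a leaf outputs x. *)
Inductive dtree (k : nat) : Type :=
| Leaf  : cube k -> dtree k
| Query : cube k -> (cube k -> dtree k) -> dtree k.

Fixpoint run (k : nat) (t : dtree k) (f : cube k -> cube k) : cube k * nat :=
  match t with
  | Leaf x => (x, 0%N)
  | Query v next => let r := run (next (f v)) f in (r.1, r.2.+1)
  end.

Definition output (k : nat) (t : dtree k) f := (run t f).1.
Definition cost (k : nat) (t : dtree k) f : nat := (run t f).2.

Definition success (k : nat) (t : dtree k) (f : cube k -> cube k) : R :=
  if f (output t f) == output t f then 1%R else 0%R.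

(* A randomized algorithm: a (countable, discrete) probability distribution
   over deterministic decision trees. *)
Record ralg (k : nat) := RAlg {
  weight : nat -> R;
  tree : nat -> dtree k;
  weight_ge0 : forall i, (0 <= weight i)%R;
  weight_sum1 : Un_cv (sum_f_R0 weight) 1%R
}.

(* For a series u of nonnegative terms: b <= sum_i u i, i.e. b is at most
   the supremum of the partial sums (the value may be +infinity). *)
Definition series_ge (u : nat -> R) (b : R) : Prop :=
  forall E : R, (forall N, (sum_f_R0 u N <= E)%R) -> (b <= E)%R.

Definition succ_prob_ge (k : nat) (A : ralg k) f (b : R) : Prop :=
  series_ge (fun i => (weight A i * success (tree A i) f)%R) b.

Definition exp_cost_ge (k : nat) (A : ralg k) f (b : R) : Prop :=
  series_ge (fun i => (weight A i * INR (cost (tree A i) f))%R) b.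

Definition solves_tarski (k : nat) (A : ralg k) : Prop :=
  forall f : cube k -> cube k, monotone f -> succ_prob_ge A f (9/10)%R.

(* Hide a point [xs] of the cube and answer a query [x] by copying [xs] up to and including
   the first coordinate [m] where [x] and [xs] differ, and repeating [x m] afterwards.  These
   maps are monotone with [xs] as their only fixed point, and a query reveals nothing but
   [xs_0, ..., xs_m].  If [xs] is uniform in a subcube of points sharing a known prefix, a
   query reveals on average fewer than two new coordinates, so a potential argument over
   subcubes shows that a decision tree outputs [xs] with probability at most
   [1/2 + E[cost] / k].  Averaging over the trees of a randomized algorithm (Yao's principle),
   an algorithm that succeeds with probability [9/10] must make at least [k/4] queries in
   expectation against one of these maps. *)

From mathcomp Require Import all_boot zify.
From Stdlib Require Import Reals Lra Classical.
(* Reals comes after all_boot so that [%R] means [R_scope], but it rebinds [^] on nat to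
   [Nat.pow]; re-importing ssrnat restores [expn]. *)
From mathcomp Require Import ssrnat.
From HB Require Import structures.
Set Implicit Arguments. Unset Strict Implicit. Unset Printing Implicit Defensive.

Section Agreement.

Variable k : nat.
Implicit Types (x y z : cube k) (m : nat).

Definition agree_upto x y m : bool := [forall j : 'I_k, (j < m) ==> (x j == y j)].

Lemma agree_uptoP x y m :
  reflect (forall j : 'I_k, j < m -> x j = y j) (agree_upto x y m).
Proof.
apply: (iffP forallP) => [H j lt_jm | H j]; first exact/eqP/(implyP (H j)).
by apply/implyP => /H ->.
Qed.

Arguments agree_uptoP {x y m}.

Lemma agree_upto0 x y : agree_upto x y 0.
Proof. exact/agree_uptoP. Qed.

Lemma agree_uptoxx x m : agree_upto x x m.
Proof. exact/agree_uptoP. Qed.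

Lemma agree_uptoW x y m m' : m' <= m -> agree_upto x y m -> agree_upto x y m'.
Proof.
by move=> le_m'm /agree_uptoP H; apply/agree_uptoP => j lt_jm'; apply/H/(leq_trans lt_jm').
Qed.

Lemma agree_uptoC x y m : agree_upto x y m = agree_upto y x m.
Proof. by apply/agree_uptoP/agree_uptoP => H j /H. Qed.

Lemma agree_upto_trans x y z m :
  agree_upto x y m -> agree_upto y z m -> agree_upto x z m.
Proof.
by move=> /agree_uptoP Hxy /agree_uptoP Hyz; apply/agree_uptoP => j lt_jm; rewrite Hxy ?Hyz.
Qed.

Lemma agree_upto_eq x y m : k <= m -> agree_upto x y m -> x = y.
Proof.
by move=> le_km /agree_uptoP H; apply/ffunP => j; apply/H/(leq_trans (ltn_ord j)).
Qed.

Lemma agree_uptoS x y (l : 'I_k) :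
  agree_upto x y l.+1 = agree_upto x y l && (x l == y l).
Proof.
apply/agree_uptoP/andP => [H | [/agree_uptoP H /eqP e] j].
  by split; [apply/agree_uptoP => j /ltnW /H | apply/eqP/H].
by rewrite ltnS leq_eqVlt => /orP [/eqP/val_inj -> | /H].
Qed.

Lemma first_mismatch x y m : ~~ agree_upto x y m ->
  exists j : 'I_k, [/\ j < m, agree_upto x y j & x j != y j].
Proof.
elim: m => [|m IH]; first by rewrite agree_upto0.
case Axy: (agree_upto x y m); last first.
  by case: (IH (negbT Axy)) => j [lt_jm Aj ne_j] _; exists j; split; rewrite // ltnW.
rewrite /agree_upto negb_forall => /existsP [j]; rewrite ltnS negb_imply.
case/andP=> le_jm ne_j; have Ej : nat_of_ord j = m.
  apply/eqP; rewrite eqn_leq le_jm leqNgt; apply: contra ne_j => lt_mj.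
  by apply/eqP/(agree_uptoP Axy).
by exists j; rewrite Ej; split; rewrite // -Ej.
Qed.

Lemma agree_upto_mismatch x y (m : 'I_k) i :
  agree_upto x y m -> x m != y m -> agree_upto x y i = (i <= m).
Proof.
move=> Axy ne_m; case: leqP => [le_im | lt_mi]; first exact: agree_uptoW Axy.
by apply/negbTE; apply: contra ne_m => /agree_uptoP ->.
Qed.

End Agreement.

Arguments agree_uptoP {k x y m}.

Section Subcubes.

Variable k : nat.
Implicit Types (p q x : cube k) (g : cube k -> nat).

Definition flip q (l : 'I_k) : cube k := [ffun i => if i == l then ~~ q i else q i].

Lemma flip_agree_upto q (l : 'I_k) : agree_upto (flip q l) q l.
Proof. by apply/agree_uptoP => j lt_jl; rewrite ffunE -val_eqE ltn_eqF. Qed.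

Lemma flip_neq q (l : 'I_k) : flip q l l != q l.
Proof. by rewrite ffunE eqxx; case: (q l). Qed.

Lemma agree_upto_flip x q (l : 'I_k) :
  agree_upto x (flip q l) l.+1 = agree_upto x q l && (x l != q l).
Proof.
have /agree_uptoP flip_lt := flip_agree_upto q l.
rewrite agree_uptoS ffunE eqxx; congr (_ && _); last by case: (x l); case: (q l).
by apply/agree_uptoP/agree_uptoP => H j lt_jl; rewrite H // ?flip_lt.
Qed.

Lemma sum_agree_uptoS q (l : 'I_k) g :
  \sum_(x | agree_upto x q l) g x =
  \sum_(x | agree_upto x q l.+1) g x + \sum_(x | agree_upto x (flip q l) l.+1) g x.
Proof.
rewrite (bigID (fun x => x l == q l)) /=.
congr addn; apply: eq_bigl => x; [by rewrite agree_uptoS | by rewrite agree_upto_flip].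
Qed.

Lemma sum_agree_upto_full q g : \sum_(x | agree_upto x q k) g x = g q.
Proof.
rewrite (eq_bigl (pred1 q)) ?big_pred1_eq // => x /=.
by apply/idP/eqP => [/(agree_upto_eq (leqnn k)) | ->]; rewrite ?agree_uptoxx.
Qed.

Lemma sum1_agree_upto q L n : L + n = k -> \sum_(x | agree_upto x q L) 1 = 2 ^ n.
Proof.
elim: n L q => [|n IH] L q def_k.
  by rewrite addn0 in def_k; rewrite def_k sum_agree_upto_full.
have lt_Lk : L < k by lia.
rewrite (sum_agree_uptoS q (Ordinal lt_Lk)) /= !IH ?expnS; lia.
Qed.

End Subcubes.

Section HardMap.

Variable k : nat.
Implicit Types (x y xs : cube k).

Definition departs_up x xs (i : nat) : bool :=
  [exists j : 'I_k, [&& j < i, agree_upto x xs j, x j & ~~ xs j]].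

Definition hard_map xs x : cube k :=
  [ffun i : 'I_k => if agree_upto x xs i then xs i else departs_up x xs i].

Lemma departs_up_mismatch x xs (m : 'I_k) i :
  agree_upto x xs m -> x m != xs m -> m < i -> departs_up x xs i = x m.
Proof.
move=> Axm ne_m lt_mi; apply/existsP/idP => [[j] | x_m].
  case/and4P=> _ /agree_uptoP Axj x_j xs_j.
  case: (ltngtP j m) => [lt_jm | lt_mj | /val_inj <- //].
    by move: xs_j; rewrite -(agree_uptoP Axm j lt_jm) x_j.
  by move: ne_m; rewrite Axj ?eqxx.
by exists m; move: ne_m; rewrite lt_mi Axm x_m; case: (xs m).
Qed.

Lemma departs_up_of_le x y xs (j : 'I_k) i : cube_le x y ->
  agree_upto x xs j -> xs j < y j -> j < i -> departs_up y xs i.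
Proof.
move=> le_xy /agree_uptoP Axj lt_j lt_ji.
have : ~~ agree_upto y xs j.+1.
  by rewrite agree_uptoS negb_and orbC; move: lt_j; case: (xs j); case: (y j).
case/first_mismatch=> j' [lt_j'j Ayj' ne_j']; apply/existsP; exists j'.
rewrite Ayj' (leq_trans lt_j'j lt_ji) /=.
have le_j' : xs j' <= y j'.
  move: lt_j'j; rewrite ltnS leq_eqVlt => /orP [/eqP/val_inj -> | lt_j'j]; first exact: ltnW.
  by rewrite -Axj //; apply: le_xy.
by move: le_j' ne_j'; case: (xs j'); case: (y j').
Qed.

Lemma hard_map_mono xs : monotone (hard_map xs).
Proof.
move=> x y le_xy i; rewrite !ffunE; case Ax: (agree_upto x xs i).
  case Ay: (agree_upto y xs i) => //.
  have [j [lt_ji _ ne_j]] := first_mismatch (negbT Ay).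
  have Axj : x j = xs j by apply: (agree_uptoP Ax).
  suff -> : departs_up y xs i by case: (xs i).
  apply: (departs_up_of_le le_xy (agree_uptoW (ltnW lt_ji) Ax) _ lt_ji).
  by move: (le_xy j) ne_j; rewrite Axj; case: (xs j); case: (y j).
case/boolP: (departs_up x xs i) => // /existsP [j /and4P [lt_ji Axj x_j xs_j]].
have lt_j : xs j < y j by move: (le_xy j); rewrite x_j (negbTE xs_j); case: (y j).
rewrite (departs_up_of_le le_xy Axj lt_j lt_ji).
case Ay: (agree_upto y xs i) => //.
by move: lt_j; rewrite (agree_uptoP Ay j lt_ji) ltnn.
Qed.

Lemma hard_map_fixE xs x : (hard_map xs x == x) = (x == xs).
Proof.
apply/eqP/eqP => [fix_x | ->]; last by apply/ffunP => i; rewrite ffunE agree_uptoxx.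
case Ax: (agree_upto x xs k); first exact: agree_upto_eq Ax.
have [j [_ Axj ne_j]] := first_mismatch (negbT Ax).
by move: ne_j; rewrite -{1}fix_x ffunE Axj eqxx.
Qed.

Lemma hard_map_local xs xs' q (m : 'I_k) : agree_upto q xs m -> q m != xs m ->
  agree_upto xs xs' m.+1 -> hard_map xs q = hard_map xs' q.
Proof.
rewrite agree_uptoS => Aqm ne_m /andP [Am /eqP e_m].
have Aqm' : agree_upto q xs' m := agree_upto_trans Aqm Am.
have ne_m' : q m != xs' m by rewrite -e_m.
apply/ffunP => i; rewrite !ffunE (agree_upto_mismatch i Aqm ne_m).
rewrite (agree_upto_mismatch i Aqm' ne_m'); case: leqP => [le_im | lt_mi].
  by move: le_im; rewrite leq_eqVlt => /orP [/eqP/val_inj -> | /(agree_uptoP Am) ->].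
by rewrite (departs_up_mismatch Aqm ne_m lt_mi) (departs_up_mismatch Aqm' ne_m' lt_mi).
Qed.

End HardMap.

Section TradeOff.

Variable k : nat.
Implicit Types (t : dtree k) (p q : cube k).

Definition solved t (f : cube k -> cube k) : bool := f (output t f) == output t f.

(* Summed over the [2 ^ n] points extending the prefix [p_0 .. p_(L-1)], with [L + n = k]:
   a tree succeeds with probability at most [(k + L) / 2k + E[cost] / k]. *)
Definition success_cost_tradeoff t n L p : Prop :=
  2 * k * \sum_(xs | agree_upto xs p L) solved t (hard_map xs) <=
  2 ^ n * (k + L) + 2 * \sum_(xs | agree_upto xs p L) cost t (hard_map xs).

Section QueryInside.

Variables (q : cube k) (next : cube k -> dtree k).
Hypothesis next_tradeoff : forall y n L p, L + n = k -> success_cost_tradeoff (next y) n L p.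

(* A query at the centre [q] of the subcube reveals [2 * 2 ^ n - 2] further coordinates of
   the hidden points in total: the [2 ^ n * 2] on the right minus the [2] on the left. *)
Lemma tradeoff_query_center n L : L + n = k ->
  2 * k * \sum_(xs | agree_upto xs q L) solved (next (hard_map xs q)) (hard_map xs) + 2 <=
  2 ^ n * (k + L + 2) + 2 * \sum_(xs | agree_upto xs q L) cost (next (hard_map xs q)) (hard_map xs).
Proof.
elim: n L => [|n IHn] L def_k.
  rewrite addn0 in def_k; rewrite def_k !sum_agree_upto_full expn0.
  have := leq_b1 (solved (next (hard_map q q)) (hard_map q)); lia.
have lt_Lk : L < k by lia.
pose l := Ordinal lt_Lk; pose y := hard_map (flip q l) q.
have answer_y xs : agree_upto xs (flip q l) l.+1 -> hard_map xs q = y.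
  move=> Axs; symmetry; apply: (@hard_map_local _ _ _ _ l).
  - by rewrite agree_uptoC flip_agree_upto.
  - by rewrite eq_sym flip_neq.
  - by rewrite agree_uptoC.
rewrite !(sum_agree_uptoS q l) /=.
have -> : \sum_(xs | agree_upto xs (flip q l) l.+1) solved (next (hard_map xs q)) (hard_map xs)
        = \sum_(xs | agree_upto xs (flip q l) l.+1) solved (next y) (hard_map xs).
  by apply: eq_bigr => xs /answer_y ->.
have -> : \sum_(xs | agree_upto xs (flip q l) l.+1) cost (next (hard_map xs q)) (hard_map xs)
        = \sum_(xs | agree_upto xs (flip q l) l.+1) cost (next y) (hard_map xs).
  by apply: eq_bigr => xs /answer_y ->.
have def_k' : l.+1 + n = k by rewrite addSnnS.
have := next_tradeoff y (flip q l) def_k'; have := IHn l.+1 def_k'.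
rewrite /success_cost_tradeoff /= expnS; nia.
Qed.

End QueryInside.

Lemma tradeoff_tree t n L p : L + n = k -> success_cost_tradeoff t n L p.
Proof.
elim: t n L p => [out | q next IH] n L p def_k; rewrite /success_cost_tradeoff.
  have solved_le1 : \sum_(xs | agree_upto xs p L) solved (Leaf out) (hard_map xs) <= 1.
    rewrite (eq_bigr (fun xs => nat_of_bool (out == xs))) => [|xs _]; last first.
      by rewrite /solved /output /= hard_map_fixE.
    rewrite big_mkcond (bigD1 out) //= eqxx big1 => [|xs ne_xs]; first by case: ifP.
    by rewrite eq_sym (negbTE ne_xs) if_same.
  have : 2 * k <= 2 ^ n * (k + L).
    by case: n def_k => [|n] def_k; rewrite ?expn0 ?expnS; [lia | have := expn_gt0 2 n; nia].
  nia.
case Aqp: (agree_upto q p L).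
  have same_subcube (xs : cube k) : agree_upto xs p L = agree_upto xs q L.
    apply/idP/idP => Axs; last exact: agree_upto_trans Axs Aqp.
    by apply: agree_upto_trans Axs _; rewrite agree_uptoC.
  rewrite !(eq_bigl _ _ same_subcube) /=.
  have -> : \sum_(xs | agree_upto xs q L) cost (Query q next) (hard_map xs)
          = \sum_(xs | agree_upto xs q L) cost (next (hard_map xs q)) (hard_map xs) + 2 ^ n.
    by rewrite -(sum1_agree_upto q def_k) -big_split; apply: eq_bigr => xs _; rewrite /= addn1.
  have center := @tradeoff_query_center q next IH n L def_k.
  have absorb_query S C P : 2 * k * S + 2 <= P * (k + L + 2) + 2 * C ->
                            2 * k * S <= P * (k + L) + 2 * (C + P) by nia.
  exact: absorb_query center.
have [j [lt_jL Aqj ne_j]] := first_mismatch (negbT Aqp).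
have answer xs : agree_upto xs p L -> hard_map xs q = hard_map p q.
  move=> Axs; apply/esym/(hard_map_local Aqj ne_j).
  by rewrite agree_uptoC (agree_uptoW lt_jL Axs).
have -> : \sum_(xs | agree_upto xs p L) solved (Query q next) (hard_map xs)
        = \sum_(xs | agree_upto xs p L) solved (next (hard_map p q)) (hard_map xs).
  by apply: eq_bigr => xs /answer; rewrite /solved /output /= => ->.
have : \sum_(xs | agree_upto xs p L) cost (next (hard_map p q)) (hard_map xs)
       <= \sum_(xs | agree_upto xs p L) cost (Query q next) (hard_map xs).
  by apply: leq_sum => xs /answer; rewrite /cost /= => ->.
have := IH (hard_map p q) n L p def_k; rewrite /success_cost_tradeoff; nia.
Qed.

End TradeOff.

Lemma tradeoff_cube k (t : dtree k) :
  2 * k * \sum_(xs : cube k) solved t (hard_map xs) <=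
  \sum_(xs : cube k) k + 2 * \sum_(xs : cube k) cost t (hard_map xs).
Proof.
have := @tradeoff_tree k t k 0 [ffun=> false] (add0n k).
rewrite /success_cost_tradeoff !(eq_bigl _ _ (fun xs => agree_upto0 xs _)).
by rewrite sum_nat_const card_ffun card_bool card_ord addn0 mulnC.
Qed.

Local Open Scope R_scope.

HB.instance Definition _ := Monoid.isComLaw.Build R 0 Rplus
  (fun x y z => esym (Rplus_assoc x y z)) Rplus_comm Rplus_0_l.
HB.instance Definition _ := Monoid.isMulLaw.Build R 0 Rmult Rmult_0_l Rmult_0_r.
HB.instance Definition _ :=
  Monoid.isAddLaw.Build R Rmult Rplus Rmult_plus_distr_r Rmult_plus_distr_l.

Lemma sum_f_R0_big (u : nat -> R) N : sum_f_R0 u N = \big[Rplus/0]_(i < N.+1) u i.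
Proof.
elim: N => [|N IH]; first by rewrite big_ord_recr big_ord0 /= Rplus_0_l.
by rewrite big_ord_recr -IH.
Qed.

Lemma big_sum_f_R0 (I : finType) (a : nat -> I -> R) N :
  \big[Rplus/0]_(x : I) sum_f_R0 (fun i => a i x) N =
  sum_f_R0 (fun i => \big[Rplus/0]_(x : I) a i x) N.
Proof.
rewrite sum_f_R0_big (eq_bigr _ (fun x _ => sum_f_R0_big (a^~ x) N)).
exact: exchange_big.
Qed.

Lemma INR_big (I : finType) (g : I -> nat) :
  INR (\sum_(i : I) g i) = \big[Rplus/0]_(i : I) INR (g i).
Proof. exact: (big_morph INR plus_INR). Qed.

Lemma big_Rle (I : finType) (P : pred I) (g h : I -> R) : (forall i, P i -> g i <= h i) ->
  \big[Rplus/0]_(i | P i) g i <= \big[Rplus/0]_(i | P i) h i.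
Proof. by move=> le_gh; apply: (big_ind2 Rle) => // [|*]; [lra | apply: Rplus_le_compat]. Qed.

Lemma exists_Rle_of_big_Rle (I : finType) (i0 : I) (g h : I -> R) :
  \big[Rplus/0]_(i : I) g i <= \big[Rplus/0]_(i : I) h i -> exists i, g i <= h i.
Proof.
move=> le_gh; apply: NNPP => no_i.
have lt_hg i : h i < g i by apply: Rnot_le_lt => le_i; apply: no_i; exists i.
suff : \big[Rplus/0]_(i : I) h i < \big[Rplus/0]_(i : I) g i by lra.
rewrite (bigD1 i0) // [X in _ < X](bigD1 i0) //=.
by apply: Rplus_lt_le_compat; [exact: lt_hg | apply: big_Rle => i _; apply: Rlt_le].
Qed.

Lemma successE k (t : dtree k) f : success t f = INR (solved t f).
Proof. by rewrite /success /solved; case: eqP. Qed.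

Section PartialSums.

Variables (k : nat) (A : ralg k).

Definition partial_success f N := sum_f_R0 (fun i => weight A i * success (tree A i) f) N.
Definition partial_cost f N := sum_f_R0 (fun i => weight A i * INR (cost (tree A i) f)) N.

Lemma big_weighted_sum (g : nat -> cube k -> R) N :
  \big[Rplus/0]_(xs : cube k) sum_f_R0 (fun i => weight A i * g i xs) N =
  sum_f_R0 (fun i => weight A i * \big[Rplus/0]_(xs : cube k) g i xs) N.
Proof.
rewrite (big_sum_f_R0 (fun i xs => weight A i * g i xs)).
by apply: sum_eq => i _; rewrite big_distrr.
Qed.

Lemma partial_success_mono f N M :
  (N <= M)%N -> partial_success f N <= partial_success f M.
Proof.
move=> /leP le_NM; apply/Rge_le/growing_prop => // n; rewrite /partial_success /=.
have := weight_ge0 A n.+1; have := pos_INR (solved (tree A n.+1) f).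
rewrite -successE; nra.
Qed.

Lemma partial_success_eventually f : succ_prob_ge A f (9/10) ->
  exists N, forall M, (N <= M)%N -> 3/4 <= partial_success f M.
Proof.
move=> succ_f; have [N lt_N] : exists N, 3/4 < partial_success f N.
  apply: NNPP => no_N.
  suff : 9/10 <= 3/4 by lra.
  by apply: succ_f => N; apply: Rnot_lt_le => lt_N; apply: no_N; exists N.
by exists N => M /(partial_success_mono f); lra.
Qed.

Lemma yao_average N :
  \big[Rplus/0]_(xs : cube k) (2 * INR k * partial_success (hard_map xs) N) <=
  \big[Rplus/0]_(xs : cube k) (INR k + 2 * partial_cost (hard_map xs) N).
Proof.
set S := fun i => INR (\sum_(xs : cube k) solved (tree A i) (hard_map xs)).
set C := fun i => INR (\sum_(xs : cube k) cost (tree A i) (hard_map xs)).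
set K := INR (\sum_(xs : cube k) k).
have tree_bound i : 2 * INR k * S i <= K + 2 * C i.
  have /leP/le_INR := tradeoff_cube (tree A i).
  by rewrite plus_INR !mult_INR (_ : INR 2 = 2) //=; lra.
have weights_le1 : sum_f_R0 (weight A) N <= 1.
  exact: sum_incr (weight_sum1 A) (weight_ge0 A).
have K_ge0 : 0 <= K := pos_INR _.
have -> : \big[Rplus/0]_(xs : cube k) (2 * INR k * partial_success (hard_map xs) N) =
          sum_f_R0 (fun i => weight A i * (2 * INR k * S i)) N.
  rewrite -big_distrr /= big_weighted_sum scal_sum.
  apply: sum_eq => i _; rewrite /S INR_big (eq_bigr _ (fun xs _ => successE _ _)).
  ring.
have -> : \big[Rplus/0]_(xs : cube k) (INR k + 2 * partial_cost (hard_map xs) N) =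
          K + 2 * sum_f_R0 (fun i => weight A i * C i) N.
  rewrite big_split -big_distrr /= big_weighted_sum /K INR_big.
  by congr (_ + 2 * _); apply: sum_eq => i _; rewrite /C INR_big.
apply: Rle_trans (_ : _ <= sum_f_R0 (fun i => weight A i * (K + 2 * C i)) N) _.
  by apply: sum_Rle => i _; apply: Rmult_le_compat_l; [exact: weight_ge0 | exact: tree_bound].
have -> : sum_f_R0 (fun i => weight A i * (K + 2 * C i)) N =
          K * sum_f_R0 (weight A) N + 2 * sum_f_R0 (fun i => weight A i * C i) N.
  by rewrite !scal_sum -plus_sum; apply: sum_eq => i _; ring.
nra.
Qed.

End PartialSums.

Lemma eventually_forall (T : finType) (P : T -> nat -> Prop) :
  (forall x, exists N, forall M, (N <= M)%N -> P x M) -> exists N, forall x, P x N.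
Proof.
move=> ev; suff [N HN] : exists N, forall x, x \in enum T -> forall M, (N <= M)%N -> P x M.
  by exists N => x; apply: HN; rewrite ?mem_enum.
elim: (enum T) => [|y s [N IH]]; first by exists 0%N.
have [Ny HNy] := ev y; exists (maxn N Ny) => x x_in M.
rewrite geq_max => /andP [le_N le_Ny].
by case/predU1P: x_in => [-> | /IH]; [exact: HNy | apply].
Qed.

Theorem proposition6 :
  exists c : R, (0 < c)%R /\
    forall (k : nat) (A : ralg k), solves_tarski A ->
      exists f : cube k -> cube k, monotone f /\ exp_cost_ge A f (c * INR k)%R.
Proof.
exists (1/4); split; first lra.
move=> k A solves_A.
have [N large_N] : exists N, forall xs : cube k, 3/4 <= partial_success A (hard_map xs) N.
  by apply: eventually_forall => xs; apply/partial_success_eventually/solves_A/hard_map_mono.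
have [xs bound_xs] := exists_Rle_of_big_Rle [ffun=> false] (yao_average A N).
exists (hard_map xs); split; first exact: hard_map_mono.
move=> E cost_le_E; have cost_N : partial_cost A (hard_map xs) N <= E := cost_le_E N.
have := large_N xs; have := pos_INR k; nra.
Qed.
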